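(* Let $\Phi:\{0,1\}^n\to\{0,1\}^n$, let $\mu\in\{0,1\}^n$ be a fixed point of $\Phi$, and let $\rho\in P_n$. Then $\overline{W}(\mu)=\overline{W}[\Phi^\rho(\mu,\cdot)]=\overline{W}[\omega_\rho(\mu)]$ and $\underline{W}(\mu)=\underline{W}[\Phi^\rho(\mu,\cdot)]=\underline{W}[\omega_\rho(\mu)]$.
   Context: Let $\mathbf{B}=\{0,1\}$ (discrete topology), $n\ge1$, $\Phi:\mathbf{B}^n\to\mathbf{B}^n$. For $\nu\in\mathbf{B}^n$: $\Phi^\nu_i(\mu)=\mu_i$ if $\nu_i=0$, $=\Phi_i(\mu)$ if $\nu_i=1$; $\Phi^{\alpha^0\dots\alpha^k}=\Phi^{\alpha^k}\circ\cdots\circ\Phi^{\alpha^0}$. A sequence $(\alpha^k)_{k\in\mathbf{N}}$ in $\mathbf{B}^n$ is progressive if each $\{k:\alpha^k_i=1\}$ is infinite. $Seq$ = strictly increasing real sequences unbounded above. $P_n$ = functions $\rho:\mathbf{R}\to\mathbf{B}^n$ with $\rho(t_k)=\alpha^k$, $\rho(t)=0$ for $t\notin\{t_k\}$, $\alpha$ progressive, $(t_k)\in Seq$. Orbit: $\Phi^\rho(\mu,t)=\mu$ for $t<t_0$, $=\Phi^{\alpha^0\dots\alpha^k}(\mu)$ for $t\in[t_k,t_{k+1})$. $\omega_\rho(\mu)=\{\mu':\exists(s_k)\in Seq,\ \Phi^\rho(\mu,s_k)=\mu'$ for all large $k\}$. $\overline{W}(\mu)=\{\mu':\exists\rho'\in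 P_n,\ \omega_{\rho'}(\mu')\subset\{\mu\}\}$, $\underline{W}(\mu)=\{\mu':\forall\rho'\in P_n,\ \omega_{\rho'}(\mu')\subset\{\mu\}\}$. Basins: $\overline{W}[\Phi^\rho(\mu,\cdot)]=\{\mu':\exists\rho'\in P_n,\exists t',\forall t\ge t',\ \Phi^{\rho'}(\mu',t)=\Phi^\rho(\mu,t)\}$, $\underline{W}[\Phi^\rho(\mu,\cdot)]=\{\mu':\forall\rho'\in P_n,\exists t',\forall t\ge t',\ \Phi^{\rho'}(\mu',t)=\Phi^\rho(\mu,t)\}$, $\overline{W}[\omega_\rho(\mu)]=\{\mu':\exists\rho'\in P_n,\ \omega_{\rho'}(\mu')=\omega_\rho(\mu)\}$, $\underline{W}[\omega_\rho(\mu)]=\{\mu':\forall\rho'\in P_n,\ \omega_{\rho'}(\mu')=\omega_\rho(\mu)\}$. *)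

From mathcomp Require Import all_boot.
From Stdlib Require Import Reals ClassicalEpsilon.

Set Implicit Arguments.
Unset Strict Implicit.
Unset Printing Implicit Defensive.

Definition state (n : nat) := {ffun 'I_n -> bool}.

Section Defs.
Variable n : nat.
Variable Phi : state n -> state n.

Definition phi_nu (nu : state n) (mu : state n) : state n :=
  [ffun i => if nu i then Phi mu i else mu i].

Definition progressive (alpha : nat -> state n) : Prop :=
  forall i : 'I_n, forall N : nat, exists k : nat, (N <= k)%coq_nat /\ alpha k i = true.

Definition Seq (t : nat -> R) : Prop :=
  (forall k, (t k < t (S k))%R) /\ (forall M : R, exists k, (M < t k)%R).

(* the element of P_n determined by (alpha, t) *)
Definition rho_of (alpha : nat -> state n) (t : nat -> R) (s : R) : state n :=
  match excluded_middle_informative (exists k, s = t k) with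
  | left H => alpha (epsilon (inhabits 0%nat) (fun k => s = t k))
  | right _ => [ffun _ => false]
  end.

Fixpoint run (alpha : nat -> state n) (mu : state n) (k : nat) : state n :=
  match k with
  | O => mu
  | S k' => phi_nu (alpha k') (run alpha mu k')
  end.

(* orbit Phi^rho(mu, s) for rho given by (alpha, t):
   mu for s < t_0, Phi^{alpha^0..alpha^k}(mu) for s in [t_k, t_{k+1}) *)
Definition orbit (alpha : nat -> state n) (t : nat -> R) (mu : state n) (s : R)
  : state n :=
  if Rlt_dec s (t 0%nat) then mu
  else run alpha mu
         (S (epsilon (inhabits 0%nat) (fun k => (t k <= s < t (S k))%R))).

Definition omega (alpha : nat -> state n) (t : nat -> R) (mu : state n)
  : state n -> Prop :=
  fun mu' => exists s : nat -> R, Seq s /\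
    exists K : nat, forall k, (K <= k)%coq_nat -> orbit alpha t mu (s k) = mu'.

(* membership in P_n, via a representation (alpha, t) *)
Definition Pn (alpha : nat -> state n) (t : nat -> R) : Prop :=
  progressive alpha /\ Seq t.

Definition Wbar (mu : state n) : state n -> Prop :=
  fun mu' => exists alpha' t', Pn alpha' t' /\
    forall x, omega alpha' t' mu' x -> x = mu.
Definition Wund (mu : state n) : state n -> Prop :=
  fun mu' => forall alpha' t', Pn alpha' t' ->
    forall x, omega alpha' t' mu' x -> x = mu.

Definition Wbar_orbit (alpha : nat -> state n) (t : nat -> R) (mu : state n)
  : state n -> Prop :=
  fun mu' => exists alpha' t'', Pn alpha' t'' /\
    exists t0 : R, forall s, (t0 <= s)%R -> orbit alpha' t'' mu' s = orbit alpha t mu s.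
Definition Wund_orbit (alpha : nat -> state n) (t : nat -> R) (mu : state n)
  : state n -> Prop :=
  fun mu' => forall alpha' t'', Pn alpha' t'' ->
    exists t0 : R, forall s, (t0 <= s)%R -> orbit alpha' t'' mu' s = orbit alpha t mu s.

Definition Wbar_omega (alpha : nat -> state n) (t : nat -> R) (mu : state n)
  : state n -> Prop :=
  fun mu' => exists alpha' t', Pn alpha' t' /\
    forall x, omega alpha' t' mu' x <-> omega alpha t mu x.
Definition Wund_omega (alpha : nat -> state n) (t : nat -> R) (mu : state n)
  : state n -> Prop :=
  fun mu' => forall alpha' t', Pn alpha' t' ->
    forall x, omega alpha' t' mu' x <-> omega alpha t mu x.

End Defs.

(* The fixed point mu makes the orbit of mu constant, so each of the three
   basin conditions on an orbit f of mu' says that f is eventually equal to mu.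
   For the limit-set conditions this uses finiteness of the state space: a
   state visited at arbitrarily large times lies in the limit set, and with
   finitely many states some time bounds all visits to states other than mu. *)
From Pilot Require Import Defs.
From mathcomp Require Import all_boot.
From Stdlib Require Import Reals Lra Lia Classical ClassicalEpsilon.

Set Implicit Arguments.
Unset Strict Implicit.

(* [omega Phi alpha t mu] is by definition [limit_set (orbit Phi alpha t mu)]. *)
Definition limit_set {T : Type} (f : R -> T) (x : T) : Prop :=
  exists s : nat -> R, Seq s /\
    exists K : nat, forall k, (K <= k)%coq_nat -> f (s k) = x.

Definition eventually_const {T : Type} (f : R -> T) (c : T) : Prop :=
  exists t0, forall s, (t0 <= s)%R -> f s = c.

Lemma exists_INR_gt (M : R) : exists k : nat, (M < INR k)%R.
Proof. by have [k Hk] := INR_archimed 1 M Rlt_0_1; exists k; lra. Qed.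

Lemma Seq_nondecreasing (s : nat -> R) :
  Seq s -> forall a b, (a <= b)%coq_nat -> (s a <= s b)%R.
Proof.
  move=> [Hinc _] a b; elim=> [|m _ IH]; first lra.
  by have := Hinc m; lra.
Qed.

Lemma Seq_shift_INR (t0 : R) : Seq (fun k => t0 + INR k)%R.
Proof.
  split=> [k|M]; first by rewrite S_INR; lra.
  by have [k Hk] := exists_INR_gt (M - t0); exists k; lra.
Qed.

Fixpoint iterate_past (g : R -> R) (k : nat) : R :=
  match k with O => g 0%R | S k' => g (iterate_past g k' + 1)%R end.

Lemma Seq_iterate_past (g : R -> R) :
  (forall M, (M < g M)%R) -> Seq (iterate_past g).
Proof.
  move=> hg; set s := iterate_past g.
  have Hstep k : (s k + 1 < s k.+1)%R by exact: hg.
  have Hnat k : (INR k < s k)%R.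
    elim: k => [|k IH]; first exact: hg.
    by rewrite S_INR; have := Hstep k; lra.
  split=> [k|M]; first by have := Hstep k; lra.
  by have [k Hk] := exists_INR_gt M; exists k; have := Hnat k; lra.
Qed.

Lemma limit_set_eventually_const (T : Type) (f : R -> T) (c : T) :
  eventually_const f c -> forall x, limit_set f x <-> x = c.
Proof.
  move=> [t0 Hf] x; split.
  - move=> [s [Hs [K HK]]].
    have [k0 Hk0] := proj2 Hs t0.
    rewrite -(HK (Nat.max K k0)); last lia.
    apply: Hf; have := Seq_nondecreasing Hs (Nat.le_max_r K k0); lra.
  - move=> ->; exists (fun k => t0 + INR k)%R; split; first exact: Seq_shift_INR.
    by exists 0%nat => k _; apply: Hf; have := pos_INR k; lra.
Qed.

Lemma frequently_limit_set (T : Type) (f : R -> T) (x : T) :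
  (forall M, exists s, (M < s)%R /\ f s = x) -> limit_set f x.
Proof.
  move=> Hfreq.
  have [g Hg] : exists g : R -> R, forall M, (M < g M)%R /\ f (g M) = x.
    exists (fun M => proj1_sig (constructive_indefinite_description _ (Hfreq M))).
    by move=> M; exact: (proj2_sig (constructive_indefinite_description _ (Hfreq M))).
  exists (iterate_past g); split; first by apply: Seq_iterate_past => M; case: (Hg M).
  by exists 0%nat => -[|k] _; exact: (proj2 (Hg _)).
Qed.

Lemma le_foldr_Rmax (T : eqType) (b : T -> R) (l : seq T) (x : T) :
  x \in l -> (b x <= foldr Rmax 0 (map b l))%R.
Proof.
  elim: l => [//|y l IH]; rewrite inE /= => /orP [/eqP ->|xl].
  - exact: Rmax_l.
  - apply: Rle_trans (IH xl) _; exact: Rmax_r.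
Qed.

Lemma limit_set_sub1_eventually_const (T : finType) (f : R -> T) (c : T) :
  (forall x, limit_set f x -> x = c) -> eventually_const f c.
Proof.
  move=> Hsub.
  have Hbound x : exists M, forall s, (M < s)%R -> f s = x -> x = c.
    case: (classic (forall M, exists s, (M < s)%R /\ f s = x)) => [Hfreq|].
    - by exists 0%R => _ _ _; apply/Hsub/frequently_limit_set.
    - move=> /not_all_ex_not [M HM]; exists M => s Hs Hfs.
      by case: HM; exists s.
  pose M x := proj1_sig (constructive_indefinite_description _ (Hbound x)).
  exists (foldr Rmax 0 (map M (enum T)) + 1)%R => s Hs.
  have HMs : (M (f s) < s)%R.
    have Hin : f s \in enum T by rewrite mem_enum.
    move: Hs (le_foldr_Rmax M Hin); set B := foldr _ _ _; lra.
  exact: (proj2_sig (constructive_indefinite_description _ (Hbound (f s))) s HMs).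
Qed.

Lemma limit_set_sub1P (T : finType) (f : R -> T) (c : T) :
  (forall x, limit_set f x -> x = c) <-> eventually_const f c.
Proof.
  split; first exact: limit_set_sub1_eventually_const.
  by move=> Hf x /(limit_set_eventually_const Hf).
Qed.

Lemma limit_set_eq_const (T : finType) (f g : R -> T) (c : T) :
  eventually_const g c ->
  (forall x, limit_set f x <-> limit_set g x) <-> eventually_const f c.
Proof.
  move=> Hg; split.
  - by move=> Hfg; apply/limit_set_sub1P => x /Hfg /(limit_set_eventually_const Hg).
  - move=> Hf x; rewrite (limit_set_eventually_const Hf).
    by rewrite (limit_set_eventually_const Hg).
Qed.

Section FixedPoint.

Variables (n : nat) (Phi : state n -> state n) (mu : state n).
Hypothesis hfix : Phi mu = mu.

Lemma run_fixed_point (alpha : nat -> state n) (k : nat) : run Phi alpha mu k = mu.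
Proof.
  elim: k => [//|k IH] /=; rewrite IH.
  by apply/ffunP => i; rewrite ffunE hfix; case: (alpha k i).
Qed.

Lemma orbit_fixed_point (alpha : nat -> state n) (t : nat -> R) (s : R) :
  Defs.orbit Phi alpha t mu s = mu.
Proof. by rewrite /Defs.orbit; destruct (Rlt_dec _ _); last exact: run_fixed_point. Qed.

Lemma orbit_fixed_point_eventually_const (alpha : nat -> state n) (t : nat -> R) :
  eventually_const (Defs.orbit Phi alpha t mu) mu.
Proof. by exists 0%R => s _; exact: orbit_fixed_point. Qed.

Lemma eventually_eq_orbit_fixed_point (alpha : nat -> state n) (t : nat -> R)
    (f : R -> state n) :
  (exists t0, forall s, (t0 <= s)%R -> f s = Defs.orbit Phi alpha t mu s) <->
  eventually_const f mu.
Proof.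
  by split=> -[t0 Hf]; exists t0 => s Hs; rewrite Hf // orbit_fixed_point.
Qed.

End FixedPoint.

Theorem theorem53 (n : nat) (hn : (0 < n)%N) (Phi : state n -> state n)
  (mu : state n) (hfix : Phi mu = mu)
  (alpha : nat -> state n) (t : nat -> R) (hrho : Pn alpha t) :
  (forall mu', (Wbar Phi mu mu' <-> Wbar_orbit Phi alpha t mu mu') /\
               (Wbar_orbit Phi alpha t mu mu' <-> Wbar_omega Phi alpha t mu mu')) /\
  (forall mu', (Wund Phi mu mu' <-> Wund_orbit Phi alpha t mu mu') /\
               (Wund_orbit Phi alpha t mu mu' <-> Wund_omega Phi alpha t mu mu')).
Proof.
  have Hlim a t' mu' :
      (forall x, omega Phi a t' mu' x -> x = mu) <->
      eventually_const (Defs.orbit Phi a t' mu') mu.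
    exact: limit_set_sub1P.
  have Horb a t' mu' :=
    eventually_eq_orbit_fixed_point hfix alpha t (Defs.orbit Phi a t' mu').
  have Hom a t' mu' :
      (forall x, omega Phi a t' mu' x <-> omega Phi alpha t mu x) <->
      eventually_const (Defs.orbit Phi a t' mu') mu.
    exact/limit_set_eq_const/orbit_fixed_point_eventually_const.
  rewrite /Wbar /Wund /Wbar_orbit /Wund_orbit /Wbar_omega /Wund_omega.
  setoid_rewrite Hlim; setoid_rewrite Horb; setoid_rewrite Hom.
  by split=> mu'; split.
Qed.
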